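(* Let $\omega\in\mathcal{F}^1(\mathbb{P}^n,e)$. Then $\mathscr{C}(\omega)=J\subseteq I\subseteq K$.
   Context: $S=\mathbb{C}[x_0,\ldots,x_n]$, $R=\sum x_i\partial/\partial x_i$. $\mathcal{F}^1(\mathbb{P}^n,e)$ ($e\ge2$) is the set of (classes up to scalar of) $\omega=\sum A_i dx_i$, $A_i\in S$ homogeneous of degree $e-1$, not all zero, with $i_R\omega=0$, $\omega\wedge d\omega=0$ and zero locus in $\mathbb{P}^n$ of codimension $\ge2$. $\mathscr{C}(\eta)$ is the ideal generated by the coefficients of a form $\eta$. $J=\{i_X\omega: X\text{ polynomial vector field}\}$; $I=\{h\in S: h\,d\omega=\omega\wedge\eta\text{ for some polynomial 1-form }\eta\}$; $K=(J\cdot\Omega^2_S:d\omega)=\{a\in S: a\,d\omega\in J\cdot\Omega^2_S\}$. *)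

From HB Require Import structures.
From mathcomp Require Import all_boot all_algebra.
From mathcomp Require Import Rstruct.
From mathcomp Require Import complex.
From mathcomp Require Import mpoly.

Set Implicit Arguments.
Unset Strict Implicit.
Unset Printing Implicit Defensive.

Import GRing.Theory.
Local Open Scope ring_scope.

Definition CC : fieldType := complex Rdefinitions.R.

Definition S (n : nat) := {mpoly CC[n.+1]}.

(* A polynomial 1-form  sum_i A_i dx_i  is given by its coefficients A_i. *)
Definition form1 (n : nat) := 'I_n.+1 -> S n.

(* A polynomial 2-form  sum_{i<j} b_ij dx_i /\ dx_j  is given by its
   antisymmetric coefficient function (b_ij for all i, j, with b_ji = - b_ij). *)
Definition form2 (n : nat) := 'I_n.+1 -> 'I_n.+1 -> S n.

Definition contr1 n (X : 'I_n.+1 -> S n) (w : form1 n) : S n :=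
  \sum_(i < n.+1) X i * w i.

Definition radial n : 'I_n.+1 -> S n := fun i => 'X_i.

(* Exterior derivative of a 1-form:
   d(sum_j A_j dx_j) = sum_{i<j} (dA_j/dx_i - dA_i/dx_j) dx_i /\ dx_j. *)
Definition d1 n (w : form1 n) : form2 n :=
  fun i j => mderiv i (w j) - mderiv j (w i).

Definition wedge11 n (w v : form1 n) : form2 n :=
  fun i j => w i * v j - w j * v i.

(* Wedge product of a 1-form and a 2-form (coefficient of dx_i/\dx_j/\dx_k). *)
Definition wedge12 n (w : form1 n) (b : form2 n) (i j k : 'I_n.+1) : S n :=
  w i * b j k - w j * b i k + w k * b i j.

Definition is_ideal n (P : S n -> Prop) : Prop :=
  P 0 /\ (forall a b, P a -> P b -> P (a + b)) /\ (forall r a, P a -> P (r * a)).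

Definition is_prime_ideal n (P : S n -> Prop) : Prop :=
  is_ideal P /\ ~ P 1 /\ (forall a b, P (a * b) -> P a \/ P b).

Definition ideal_gen n (G : S n -> Prop) : S n -> Prop :=
  fun x => forall P, is_ideal P -> (forall g, G g -> P g) -> P x.

Definition strict_sub n (P Q : S n -> Prop) : Prop :=
  (forall x, P x -> Q x) /\ exists x, Q x /\ ~ P x.

Definition height_ge2 n (P : S n -> Prop) : Prop :=
  exists P0 P1, is_prime_ideal P0 /\ is_prime_ideal P1 /\
    strict_sub P0 P1 /\ strict_sub P1 P.

(* The zero locus of w (the common zeros of its coefficients A_i) has
   codimension >= 2: the ideal (A_0,...,A_n) has height >= 2, i.e. every prime
   ideal containing all A_i has height >= 2. *)
Definition zero_locus_codim_ge2 n (w : form1 n) : Prop :=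
  forall P, is_prime_ideal P -> (forall i, P (w i)) -> height_ge2 P.

Definition in_F1 n (e : nat) (w : form1 n) : Prop :=
  (2 <= e)%N /\
  (forall i, w i \is (e.-1).-homog) /\
  (exists i, w i != 0) /\
  contr1 (@radial n) w = 0 /\
  (forall i j k, wedge12 w (d1 w) i j k = 0) /\
  zero_locus_codim_ge2 w.

Definition Cideal n (w : form1 n) : S n -> Prop :=
  ideal_gen (fun g => exists i, g = w i).

Definition Jideal n (w : form1 n) : S n -> Prop :=
  fun h => exists X : 'I_n.+1 -> S n, h = contr1 X w.

Definition Iideal n (w : form1 n) : S n -> Prop :=
  fun h => exists eta : form1 n, forall i j, h * d1 w i j = wedge11 w eta i j.

(* K = (J . Omega^2_S : dw) = { a : every coefficient of a dw lies in J }. *)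
Definition Kideal n (w : form1 n) : S n -> Prop :=
  fun a => forall i j, Jideal w (a * d1 w i j).

From HB Require Import structures.
From mathcomp Require Import all_boot all_algebra.
From mathcomp Require Import Rstruct complex mpoly.

(* [J] is the ideal generated by the coefficients of [w], since [i_X w = w i]
   for the coordinate field [X = d/dx_i].  Contracting the integrability
   identity [w /\ dw = 0] with [X] gives [(i_X w) dw = w /\ i_X dw], so [J]
   lies in [I].  Each coefficient of [w /\ eta] is [i_Y w] for
   [Y = eta_j d/dx_i - eta_i d/dx_j], so [I] lies in [K]. *)

Set Implicit Arguments.
Unset Strict Implicit.
Unset Printing Implicit Defensive.
Import GRing.Theory.
Local Open Scope ring_scope.

Section Contraction.

Variables (n : nat) (w : form1 n).

Lemma contr10 : contr1 (fun=> 0) w = 0.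
Proof. by rewrite /contr1 big1 // => i _; rewrite mul0r. Qed.

Lemma contr1D (X Y : 'I_n.+1 -> S n) :
  contr1 (fun k => X k + Y k) w = contr1 X w + contr1 Y w.
Proof. by rewrite /contr1 -big_split; apply: eq_bigr => i _; rewrite mulrDl. Qed.

Lemma contr1B (X Y : 'I_n.+1 -> S n) :
  contr1 (fun k => X k - Y k) w = contr1 X w - contr1 Y w.
Proof. by rewrite /contr1 -sumrB; apply: eq_bigr => i _; rewrite mulrBl. Qed.

Lemma contr1Ml (r : S n) (X : 'I_n.+1 -> S n) :
  contr1 (fun k => r * X k) w = r * contr1 X w.
Proof. by rewrite /contr1 mulr_sumr; apply: eq_bigr => i _; rewrite mulrA. Qed.

Lemma contr1Mr (r : S n) (X : 'I_n.+1 -> S n) :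
  contr1 X w * r = contr1 X (fun k => w k * r).
Proof. by rewrite /contr1 mulr_suml; apply: eq_bigr => i _; rewrite mulrA. Qed.

Lemma contr1_delta (i : 'I_n.+1) (c : S n) :
  contr1 (fun k => (k == i)%:R * c) w = c * w i.
Proof.
rewrite /contr1 (bigD1 i) //= eqxx mul1r big1 ?addr0 // => k /negbTE ->.
by rewrite mul0r mul0r.
Qed.

Lemma Jideal_is_ideal : is_ideal (Jideal w).
Proof.
split; [|split].
- by exists (fun=> 0); rewrite contr10.
- by move=> _ _ [X ->] [Y ->]; exists (fun k => X k + Y k); rewrite contr1D.
- by move=> r _ [X ->]; exists (fun k => r * X k); rewrite contr1Ml.
Qed.

Lemma coef_in_Jideal (i : 'I_n.+1) : Jideal w (w i).
Proof. by exists (fun k => (k == i)%:R * 1); rewrite contr1_delta mul1r. Qed.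

Lemma contr1_in_ideal (P : S n -> Prop) (X : 'I_n.+1 -> S n) :
  is_ideal P -> (forall i, P (w i)) -> P (contr1 X w).
Proof.
move=> [P0 [PD PM]] Pw.
by apply: (big_ind P) => // i _; apply: PM.
Qed.

Lemma Cideal_Jideal (h : S n) : Cideal w h <-> Jideal w h.
Proof.
split.
- by move=> Ch; apply: Ch; [exact: Jideal_is_ideal | move=> _ [i ->]; exact: coef_in_Jideal].
- move=> [X ->] P Pideal Pgen.
  by apply: contr1_in_ideal => // i; apply: Pgen; exists i.
Qed.

Lemma wedge11_in_Jideal (eta : form1 n) (i j : 'I_n.+1) :
  Jideal w (wedge11 w eta i j).
Proof.
exists (fun k => (k == i)%:R * eta j - (k == j)%:R * eta i).
by rewrite contr1B !contr1_delta /wedge11 ![eta _ * w _]mulrC.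
Qed.

Lemma Iideal_sub_Kideal (h : S n) : Iideal w h -> Kideal w h.
Proof. by move=> [eta Heta] i j; rewrite Heta; exact: wedge11_in_Jideal. Qed.

Lemma wedge12_eq0_coef (b : form2 n) (i j k : 'I_n.+1) :
  wedge12 w b i j k = 0 -> w i * b j k = w j * b i k - w k * b i j.
Proof.
by rewrite /wedge12 addrAC => /eqP; rewrite subr_eq0 => /eqP <-; rewrite addrK.
Qed.

Lemma contr1_mul_wedge (b : form2 n) (X : 'I_n.+1 -> S n) (j k : 'I_n.+1) :
  (forall i, wedge12 w b i j k = 0) ->
  contr1 X w * b j k = wedge11 w (fun l => contr1 X (fun i => b i l)) j k.
Proof.
move=> wb0; rewrite contr1Mr /wedge11 /contr1 !mulr_sumr -sumrB.
apply: eq_bigr => i _; rewrite (wedge12_eq0_coef (wb0 i)) mulrBr.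
by rewrite !(mulrCA (X i)).
Qed.

End Contraction.

Theorem proposition4p7 (n e : nat) (w : form1 n) :
  in_F1 e w ->
  (forall h, Cideal w h <-> Jideal w h) /\
  (forall h, Jideal w h -> Iideal w h) /\
  (forall h, Iideal w h -> Kideal w h).
Proof.
move=> [_ [_ [_ [_ [integrable _]]]]].
split; [exact: Cideal_Jideal | split; last exact: Iideal_sub_Kideal].
move=> _ [X ->]; exists (fun l => contr1 X (fun i => d1 w i l)) => j k.
exact: contr1_mul_wedge.
Qed.
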